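(* For $1\le p<\infty$ and $N\ge1$, let $F_p:(\mathbb{R}^N\setminus\{0\})\times\mathbb{S}(N)\to\mathbb{R}$, $$F_p(\nu,X)=-|\nu|^{p-2}\Big[\operatorname{tr}X+(p-2)\Big\langle X\frac{\nu}{|\nu|},\frac{\nu}{|\nu|}\Big\rangle\Big],$$ regarded as a function on $\mathcal{D}=\Omega\times\mathbb{R}\times(\mathbb{R}^N\setminus\{0\})\times\mathbb{S}(N)$ independent of the $x$ and $u$ variables. Then $F_p$ belongs to Class M if and only if $p\in(1,\infty)$.
   Context: $\mathbb{S}(N)$ is the space of real symmetric $N\times N$ matrices with the Löwner order; $\lambda_1(X)\le\dots\le\lambda_N(X)$ are the eigenvalues of $X$. Class M (for $F:\mathcal{D}\to\mathbb{R}$, $\mathcal{D}\subseteq\Omega\times\mathbb{R}\times\mathbb{R}^N\times\mathbb{S}(N)$): $F$ is continuous in its matrix entry, and for every $\omega$ and sets $\mathcal{S}_1,\mathcal{S}_2\subseteq\mathbb{S}(N)$ with $\{\omega\}\times\mathcal{S}_i\subseteq\mathcal{D}$, there exist $g_i:\mathbb{R}\times\mathcal{S}_i\to\mathbb{R}$ (possibly depending on $\omega$) such that: (1) for each fixed $M_0\in\mathcal{S}_i$, $t\mapsto g_i(t,M_0)$ is an increasing bijection $\mathbb{R}\to\mathbb{R}$, with inverse $s\mapsto g_i(-,M_0)^{-1}(s)$; (2) $M\mapsto g_i(-,M)^{-1}(0)$ is continuous on $\mathcal{S}_i$; (3) for $M\in\mathcal{S}_1$, if $(\omega,X)\in\mathcal{D}$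 and $X\le M$ then $-F(\omega,X)\le g_1(\lambda_1(X),M)$; (4) for $M\in\mathcal{S}_2$, if $(\omega,Y)\in\mathcal{D}$ and $-Y\le M$ then $-F(\omega,Y)\ge g_2(\lambda_N(Y),M)$. *)

From HB Require Import structures.
From mathcomp Require Import all_boot all_order all_algebra.
From mathcomp Require Import all_classical all_reals all_analysis.
Set Implicit Arguments. Unset Strict Implicit. Unset Printing Implicit Defensive.
Import Order.TTheory GRing.Theory Num.Theory.
Import numFieldNormedType.Exports.
Local Open Scope classical_set_scope.
Local Open Scope ring_scope.

Definition symmx {R : realType} {N : nat} (X : 'M[R]_N) : Prop := X^T = X.

Definition loewner_le {R : realType} {N : nat} (X M : 'M[R]_N) : Prop :=
  forall v : 'cV[R]_N, 0 <= (v^T *m (M - X) *m v) ord0 ord0.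

Definition lam_min {R : realType} {N : nat} (X : 'M[R]_N) : R :=
  inf [set a : R | eigenvalue X a].
Definition lam_max {R : realType} {N : nat} (X : 'M[R]_N) : R :=
  sup [set a : R | eigenvalue X a].

(* Class M for F : W -> S(N) -> R, defined on the domain D ⊆ W × S(N),
   where W plays the role of Ω × R × R^N (the variable ω). *)
Definition classM {R : realType} {N : nat} {W : Type}
  (D : W -> 'M[R]_N -> Prop) (F : W -> 'M[R]_N -> R) : Prop :=
  (forall w, {within [set X | D w X], continuous (F w)}) /\
  (forall (w : W) (S1 S2 : set 'M[R]_N),
     (forall X, S1 X -> symmx X) -> (forall X, S2 X -> symmx X) ->
     (forall X, S1 X -> D w X) -> (forall X, S2 X -> D w X) ->
     exists (g1 g2 : R -> 'M[R]_N -> R) (h1 h2 : 'M[R]_N -> R),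
       (forall M0, S1 M0 -> {homo g1^~ M0 : s t / s < t} /\ bijective (g1^~ M0)) /\
       (forall M0, S2 M0 -> {homo g2^~ M0 : s t / s < t} /\ bijective (g2^~ M0)) /\
       (forall M, S1 M -> g1 (h1 M) M = 0) /\ {within S1, continuous h1} /\
       (forall M, S2 M -> g2 (h2 M) M = 0) /\ {within S2, continuous h2} /\
       (forall M X, S1 M -> D w X -> loewner_le X M ->
          - F w X <= g1 (lam_min X) M) /\
       (forall M Y, S2 M -> D w Y -> loewner_le (- Y) M ->
          - F w Y >= g2 (lam_max Y) M)).

Definition vnorm {R : realType} {N : nat} (v : 'cV[R]_N) : R :=
  Num.sqrt ((v^T *m v) ord0 ord0).

Definition Fp {R : realType} {N : nat} (p : R) (nu : 'cV[R]_N) (X : 'M[R]_N) : R :=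
  - (vnorm nu `^ (p - 2)) *
    (\tr X + (p - 2) * ((nu^T *m X *m nu) ord0 ord0 / (vnorm nu ^+ 2))).

(* ω = (x, u, ν) ∈ R^N × R × R^N; domain Ω × R × (R^N \ {0}) × S(N) *)
Definition DFp {R : realType} {N : nat} (Omega : set 'cV[R]_N)
  (w : 'cV[R]_N * R * 'cV[R]_N) (X : 'M[R]_N) : Prop :=
  Omega w.1.1 /\ w.2 != 0 /\ symmx X.

Definition Fp_full {R : realType} {N : nat} (p : R)
  (w : 'cV[R]_N * R * 'cV[R]_N) (X : 'M[R]_N) : R := Fp p w.2 X.

From HB Require Import structures.
From mathcomp Require Import all_boot all_order all_algebra.
From mathcomp Require Import all_classical all_reals all_analysis.
From mathcomp Require Import ring lra.
Set Implicit Arguments. Unset Strict Implicit. Unset Printing Implicit Defensive.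
Import Order.TTheory GRing.Theory Num.Theory.
Import numFieldNormedType.Exports.
Local Open Scope classical_set_scope.
Local Open Scope ring_scope.

(* For p > 1 the operator is uniformly elliptic: for P >= 0,
   tr P + (p - 2) <P nu, nu> / |nu|^2 >= min(1, p - 1) tr P.  For X <= M put
   P = M - X and bound tr P from below by <P v, v> at a unit eigenvector v of
   X for lambda_1(X); this gives -F_p(nu, X) <= |nu|^(p-2) (a(M) + c lambda_1(X))
   with a continuous in M, so g_1 can be taken affine in t, and (4) is the same
   estimate applied to -Y.  Extreme eigenvectors are obtained by minimising the
   Rayleigh quotient over the compact unit sphere.  For p = 1 the operator
   degenerates along nu: F_1(nu, t nu nu^T) = 0 for all t >= 0 while
   lambda_N(t nu nu^T) = t grows without bound, which contradicts (4) at M = 0. *)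

Lemma nonneg_quadratic_lin_eq0 (R : realFieldType) (a b : R) :
  0 <= b -> (forall t, 0 <= 2 * t * a + t ^+ 2 * b) -> a = 0.
Proof.
move=> b_ge0 nonneg; have b1_gt0 : 0 < b + 1 by lra.
have := nonneg (- a / (b + 1)).
have -> : 2 * (- a / (b + 1)) * a + (- a / (b + 1)) ^+ 2 * b
          = - (a ^+ 2 * (b + 2)) / (b + 1) ^+ 2.
  by field; rewrite gt_eqF.
rewrite pmulr_lge0 ?invr_gt0 ?exprn_gt0 // oppr_ge0 => a2_le0.
apply/eqP; rewrite -sqrf_eq0 eq_le sqr_ge0 andbT.
by rewrite -(pmulr_lle0 _ (_ : 0 < b + 2)) //; lra.
Qed.

Section QuadraticForm.
Variables (R : realFieldType) (n : nat).
Implicit Types (A P : 'M[R]_n) (u v w : 'cV[R]_n).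

Definition qform A v : R := (v^T *m A *m v) ord0 ord0.
Definition sqnorm v : R := (v^T *m v) ord0 ord0.
Definition psdmx P := forall v, 0 <= qform P v.
Definition mx_abs_sum A : R := \sum_i \sum_j `|A i j|.

Lemma sqnorm_sum v : sqnorm v = \sum_i v i ord0 ^+ 2.
Proof. by rewrite /sqnorm mxE; apply: eq_bigr => i _; rewrite mxE expr2. Qed.

Lemma sqnorm_ge0 v : 0 <= sqnorm v.
Proof. by rewrite sqnorm_sum; apply: sumr_ge0 => i _; exact: sqr_ge0. Qed.

Lemma sqr_coord_le_sqnorm v i : v i ord0 ^+ 2 <= sqnorm v.
Proof.
rewrite sqnorm_sum (bigD1 i) //= lerDl.
by apply: sumr_ge0 => j _; exact: sqr_ge0.
Qed.

Lemma sqnorm_eq0 v : (sqnorm v == 0) = (v == 0).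
Proof.
apply/eqP/eqP => [v0|->]; last by rewrite /sqnorm mulmx0 mxE.
apply/matrixP => i j; rewrite (ord1 j) mxE.
apply/eqP; rewrite -sqrf_eq0 eq_le sqr_ge0 andbT -v0.
exact: sqr_coord_le_sqnorm.
Qed.

Lemma sqnorm_gt0 v : (0 < sqnorm v) = (v != 0).
Proof. by rewrite lt_def sqnorm_ge0 andbT sqnorm_eq0. Qed.

Lemma unit_coord_le1 v i : sqnorm v = 1 -> `|v i ord0| <= 1.
Proof.
move=> v1; rewrite -(expr_le1 (n := 2)) // real_normK ?num_real //.
by rewrite -v1 sqr_coord_le_sqnorm.
Qed.

Lemma sqnormE v : sqnorm v = qform 1%:M v.
Proof. by rewrite /qform mulmx1. Qed.

Lemma qformZ A a v : qform A (a *: v) = a ^+ 2 * qform A v.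
Proof. by rewrite /qform -scalemxAr linearZ /= -!scalemxAl !mxE mulrA expr2. Qed.

Lemma sqnormZ a v : sqnorm (a *: v) = a ^+ 2 * sqnorm v.
Proof. by rewrite !sqnormE qformZ. Qed.

Lemma qformB A B v : qform (A - B) v = qform A v - qform B v.
Proof. by rewrite /qform mulmxBr mulmxBl !mxE. Qed.

Lemma qformN A v : qform (- A) v = - qform A v.
Proof. by rewrite -sub0r qformB /qform mulmx0 mul0mx mxE sub0r. Qed.

Lemma qformZl a A v : qform (a *: A) v = a * qform A v.
Proof. by rewrite /qform -scalemxAr -scalemxAl mxE. Qed.

Lemma qform_rank1 u v : qform (u *m u^T) v = (u^T *m v) ord0 ord0 ^+ 2.
Proof.
have vu : v^T *m u = (u^T *m v)^T by rewrite trmx_mul trmxK.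
by rewrite /qform !mulmxA -(mulmxA _ u^T v) vu mxE big_ord1 mxE expr2.
Qed.

Lemma psdmx_rank1 u : psdmx (u *m u^T).
Proof. by move=> v; rewrite qform_rank1 sqr_ge0. Qed.

Lemma qform_sum A v : qform A v = \sum_i \sum_j v i ord0 * A i j * v j ord0.
Proof.
rewrite /qform mxE exchange_big; apply: eq_bigr => j _; rewrite mxE big_distrl.
by apply: eq_bigr => i _; rewrite mxE.
Qed.

Lemma qform_eigen A a v : A *m v = a *: v -> qform A v = a * sqnorm v.
Proof. by rewrite /qform -mulmxA => ->; rewrite -scalemxAr mxE. Qed.

Lemma unit_qform_ge A v : sqnorm v = 1 -> - mx_abs_sum A <= qform A v.
Proof.
move=> v1; suff : `|qform A v| <= mx_abs_sum A by rewrite ler_norml => /andP[].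
rewrite qform_sum; apply: le_trans (ler_norm_sum _ _ _) (ler_sum _ _) => i _.
apply: le_trans (ler_norm_sum _ _ _) (ler_sum _ _) => j _.
rewrite !normrM -[leRHS]mul1r -[leRHS]mulr1.
apply: ler_pM; rewrite ?mulr_ge0 ?unit_coord_le1 //.
by apply: ler_pM; rewrite ?unit_coord_le1.
Qed.

Lemma qform_expand A v w t : A^T = A ->
  qform A (v + t *: w) =
  qform A v + 2 * t * (w^T *m A *m v) ord0 ord0 + t ^+ 2 * qform A w.
Proof.
move=> A_sym.
have wAv : v^T *m A *m w = w^T *m A *m v.
  apply/matrixP => i j; rewrite !ord1.
  transitivity ((w^T *m A *m v)^T ord0 ord0); last by rewrite mxE.
  by rewrite !trmx_mul trmxK A_sym mulmxA.
rewrite /qform !linearD !linearZ /= !(mulmxDl, mulmxDr) -?scalemxAl -?scalemxAr wAv.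
by move: (v^T *m A *m v) (w^T *m A *m v) (w^T *m A *m w) => a b c; rewrite !mxE; ring.
Qed.

Lemma psdmx_qform_eq0 A v : A^T = A -> psdmx A -> qform A v = 0 -> A *m v = 0.
Proof.
move=> A_sym A_psd Av0; set w := A *m v.
have wAv : (w^T *m A *m v) ord0 ord0 = sqnorm w by rewrite -mulmxA.
apply/eqP; rewrite -sqnorm_eq0; apply/eqP.
apply: (nonneg_quadratic_lin_eq0 (A_psd w)) => t.
by have := A_psd (v + t *: w); rewrite qform_expand // Av0 add0r wAv.
Qed.

Lemma mxtrace_qform_cols m P (B : 'M[R]_(n, m)) :
  \tr (B^T *m P *m B) = \sum_i qform P (col i B).
Proof.
apply: eq_bigr => i _; rewrite /qform !mxE; apply: eq_bigr => k _; rewrite !mxE.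
by congr (_ * _); apply: eq_bigr => j _; rewrite !mxE.
Qed.

Lemma psdmx_trace_ge0 P : psdmx P -> 0 <= \tr P.
Proof.
move=> P_psd; have -> : P = 1%:M^T *m P *m 1%:M by rewrite trmx1 mul1mx mulmx1.
rewrite mxtrace_qform_cols.
by apply: sumr_ge0 => i _; exact: P_psd.
Qed.

Lemma psdmx_qform_le_trace P e : psdmx P -> qform P e <= sqnorm e * \tr P.
Proof.
move=> P_psd; set s := sqnorm e; set q := qform P e; pose E := e *m e^T.
have tr1 (C : 'M[R]_1) : \tr C = C ord0 ord0 by rewrite /mxtrace big_ord1.
have mul11 (C D : 'M[R]_1) : (C *m D) ord0 ord0 = C ord0 ord0 * D ord0 ord0.
  by rewrite mxE big_ord1.
have trEP : \tr (E *m P) = q by rewrite -mulmxA mxtrace_mulC tr1.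
have trPE : \tr (P *m E) = q by rewrite mxtrace_mulC.
have trEPE : \tr (E *m P *m E) = q * s.
  by rewrite -!mulmxA mxtrace_mulC !mulmxA tr1 -(mulmxA _ e^T e) mul11.
have E_sym : E^T = E by rewrite trmx_mul trmxK.
(* Test P against the columns of B := s I - e e^T: 0 <= tr (B P B) = s (s tr P - q). *)
have : 0 <= \tr ((s%:M - E)^T *m P *m (s%:M - E)).
  by rewrite mxtrace_qform_cols; apply: sumr_ge0 => i _; exact: P_psd.
rewrite [(s%:M - E)^T]linearB /= tr_scalar_mx E_sym !(mulmxBl, mulmxBr).
rewrite !(mul_scalar_mx, mul_mx_scalar) -!scalemxAl !raddfB /= !mxtraceZ.
rewrite trEP trPE trEPE.
have [e0|e_nz] := eqVneq e 0.
  by move=> _; rewrite /q /s e0 /qform /sqnorm !mulmx0 !mxE mul0r.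
have s_gt0 : 0 < s by rewrite sqnorm_gt0.
nra.
Qed.

End QuadraticForm.

Section NormalizedPLaplacian.
Variables (R : realFieldType) (n : nat).
Implicit Types (M P X Y : 'M[R]_n) (nu v : 'cV[R]_n).

(* The normalized p-Laplacian: the bracket in [Fp]. *)
Definition nplap (p : R) nu X : R := \tr X + (p - 2) * (qform X nu / sqnorm nu).

Lemma nplapB p nu M X : nplap p nu (M - X) = nplap p nu M - nplap p nu X.
Proof. by rewrite /nplap raddfB /= qformB; ring. Qed.

Lemma nplapN p nu Y : nplap p nu (- Y) = - nplap p nu Y.
Proof. by rewrite /nplap raddfN /= qformN; ring. Qed.

Lemma nplap1_rank1 nu t : nplap 1 nu (t *: (nu *m nu^T)) = 0.
Proof.
rewrite /nplap mxtraceZ mxtrace_mulC /mxtrace big_ord1 qformZl qform_rank1.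
rewrite -/(sqnorm nu); have [->|sqnorm_nz] := eqVneq (sqnorm nu) 0; last by field.
by rewrite expr0n /= !(mulr0, mul0r) addr0.
Qed.

Lemma nplap_psd_ge p nu P :
  psdmx P -> Num.min 1 (p - 1) * \tr P <= nplap p nu P.
Proof.
move=> P_psd; set c := Num.min 1 (p - 1); set r := qform P nu / sqnorm nu.
have c_le1 : c <= 1 by rewrite ge_min lexx.
have c_le_p1 : c <= p - 1 by rewrite ge_min lexx orbT.
have tr_ge0 := psdmx_trace_ge0 P_psd.
have /andP[r_ge0 r_le_tr] : 0 <= r <= \tr P.
  have [nu0|nu_nz] := eqVneq nu 0.
    by rewrite /r nu0 /qform mulmx0 mxE mul0r lexx tr_ge0.
  have nu_gt0 : 0 < sqnorm nu by rewrite sqnorm_gt0.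
  rewrite divr_ge0 ?P_psd ?sqnorm_ge0 //= ler_pdivrMr // mulrC.
  exact: psdmx_qform_le_trace.
rewrite /nplap -/r; have [p_le2|p_gt2] := lerP p 2; nra.
Qed.

Lemma nplap_le_psd_sub p nu X M v : 1 <= p -> psdmx (M - X) -> sqnorm v = 1 ->
  nplap p nu X <= nplap p nu M + Num.min 1 (p - 1) * (mx_abs_sum M + qform X v).
Proof.
move=> p_ge1 MX_psd v1; set c := Num.min 1 (p - 1).
have c_ge0 : 0 <= c by rewrite le_min ler01 subr_ge0 p_ge1.
have := nplap_psd_ge p nu MX_psd; rewrite nplapB -/c.
have := psdmx_qform_le_trace v MX_psd; rewrite v1 mul1r qformB.
have := unit_qform_ge M v1.
nra.
Qed.

End NormalizedPLaplacian.

Section RealContinuity.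
Variable R : realType.

Lemma continuous_sum (T : topologicalType) (I : Type) (r : seq I)
    (F : I -> T -> R) :
  (forall i, continuous (F i)) -> continuous (fun x => \sum_(i <- r) F i x).
Proof.
move=> F_cont; apply: continuous_big => [|i _]; first exact: add_continuous.
exact: F_cont.
Qed.

Lemma continuous_mul (T : topologicalType) (f g : T -> R) :
  continuous f -> continuous g -> continuous (fun x => f x * g x).
Proof.
by move=> f_cont g_cont x; apply: continuousM; [exact: f_cont | exact: g_cont].
Qed.

End RealContinuity.

Section Rayleigh.
Variables (R : realType) (n : nat).
Implicit Types (A : 'M[R]_n) (u : 'cV[R]_n).

Lemma qform_trmx_continuous A : continuous (fun x : 'rV[R]_n => qform A x^T).
Proof.
have -> : (fun x : 'rV[R]_n => qform A x^T) =
          (fun x => \sum_i \sum_j x ord0 i * A i j * x ord0 j).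
  by apply/funext => x; rewrite qform_sum; apply: eq_bigr => i _;
     apply: eq_bigr => j _; rewrite !mxE.
apply: continuous_sum => i; apply: continuous_sum => j.
apply: continuous_mul; last exact: coord_continuous.
by apply: continuous_mul; [exact: coord_continuous | exact: cst_continuous].
Qed.

(* Taken in row vectors, where Heine-Borel is available as [rV_compact]. *)
Lemma unit_sphere_compact : compact [set x : 'rV[R]_n | sqnorm x^T = 1].
Proof.
have sphere_closed : closed [set x : 'rV[R]_n | sqnorm x^T = 1].
  have -> : [set x : 'rV[R]_n | sqnorm x^T = 1] =
            (fun x => qform 1%:M x^T) @^-1` [set x | x = 1].
    by apply/seteqP; split => x /=; rewrite sqnormE.
  apply: preimage_closed; last exact: closed_eq.
  by move=> x _; exact: qform_trmx_continuous.
apply: (subclosed_compact sphere_closed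
  (@rV_compact _ n (fun=> `[(-1 : R), 1]%classic) (fun=> @segment_compact R (-1) 1))).
move=> x x1 i /=; rewrite in_itv /= -ler_norml.
by have := unit_coord_le1 i x1; rewrite mxE.
Qed.

Lemma rayleigh_min_exists A : (0 < n)%N ->
  exists2 c, sqnorm c = 1 & forall u, qform A c * sqnorm u <= qform A u.
Proof.
move=> n_gt0; pose e0 : 'rV[R]_n := delta_mx ord0 (Ordinal n_gt0).
have sphere_n0 : [set x : 'rV[R]_n | sqnorm x^T = 1] !=set0.
  by exists e0; rewrite /= /sqnorm trmxK trmx_delta mul_delta_mx mxE !eqxx.
have [c c1 c_min] := compact_EVT_min sphere_n0 unit_sphere_compact
  (continuous_subspaceT (qform_trmx_continuous (A := A))).
move: c1; rewrite inE /= => c1; exists c^T => // u.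
have [->|u_nz] := eqVneq u 0; first by rewrite /qform /sqnorm !mulmx0 !mxE mulr0.
have u_gt0 : 0 < sqnorm u by rewrite sqnorm_gt0.
pose r := Num.sqrt (sqnorm u); have r_gt0 : 0 < r by rewrite sqrtr_gt0.
have r2 : r ^+ 2 = sqnorm u by rewrite sqr_sqrtr // ltW.
have := c_min (r^-1 *: u)^T; rewrite inE /= !trmxK sqnormZ qformZ exprVn r2.
by rewrite mulVf ?gt_eqF // => /(_ erefl); rewrite ler_pdivlMl // mulrC.
Qed.

Lemma rayleigh_min_eigen A c m : A^T = A ->
  (forall u, m * sqnorm u <= qform A u) -> qform A c = m * sqnorm c ->
  A *m c = m *: c.
Proof.
move=> A_sym m_min c_min.
have qform_scalar u : qform m%:M u = m * sqnorm u.
  by rewrite /qform mul_mx_scalar -scalemxAl mxE.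
have shift_sym : (A - m%:M)^T = A - m%:M by rewrite linearB /= tr_scalar_mx A_sym.
have shift_psd : psdmx (A - m%:M).
  by move=> u; rewrite qformB qform_scalar subr_ge0.
have := psdmx_qform_eq0 (v := c) shift_sym shift_psd.
rewrite qformB qform_scalar c_min subrr mulmxBl mul_scalar_mx => /(_ erefl) /eqP.
by rewrite subr_eq0 => /eqP.
Qed.

Lemma lam_min_rayleigh A : (0 < n)%N -> A^T = A ->
  exists2 c, sqnorm c = 1 &
    qform A c = lam_min A /\ forall u, lam_min A * sqnorm u <= qform A u.
Proof.
move=> n_gt0 A_sym; have [c c1 c_min] := rayleigh_min_exists A n_gt0.
set m := qform A c in c_min *.
have Ac : A *m c = m *: c by apply: rayleigh_min_eigen; rewrite // c1 mulr1.
have m_eig : eigenvalue A m.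
  apply/eigenvalueP; exists c^T; first by rewrite -{1}A_sym -trmx_mul Ac linearZ.
  by rewrite trmx_eq0 -sqnorm_eq0 c1 oner_eq0.
have m_lb : lbound [set a | eigenvalue A a] m.
  move=> a /eigenvalueP [w wA w_nz].
  have Aw : A *m w^T = a *: w^T by rewrite -[A]A_sym -trmx_mul wA linearZ.
  by have := c_min w^T; rewrite (qform_eigen Aw) ler_pM2r // sqnorm_gt0 trmx_eq0.
have -> : lam_min A = m.
  apply/le_anti/andP; split; first exact: (ge_inf (ex_intro _ m m_lb)).
  by apply: lb_le_inf => //; exists m.
by exists c.
Qed.

Lemma eigenvalueN A a : eigenvalue (- A) a = eigenvalue A (- a).
Proof.
apply/eigenvalueP/eigenvalueP => -[v vA v_nz]; exists v => //.
  by rewrite scaleNr -vA mulmxN opprK.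
by rewrite mulmxN vA scaleNr opprK.
Qed.

Lemma lam_maxE A : lam_max A = - lam_min (- A).
Proof.
rewrite /lam_min /inf opprK; congr sup; apply/seteqP; split => a /=.
  by move=> A_a; exists (- a); rewrite ?opprK // eigenvalueN opprK.
by move=> [b NA_b <-]; rewrite -eigenvalueN.
Qed.

Lemma lam_max_rayleigh A : (0 < n)%N -> A^T = A ->
  exists2 c, sqnorm c = 1 &
    qform A c = lam_max A /\ forall u, qform A u <= lam_max A * sqnorm u.
Proof.
move=> n_gt0 A_sym; have NA_sym : (- A)^T = - A by rewrite linearN /= A_sym.
have [c c1 [cE c_max]] := lam_min_rayleigh n_gt0 NA_sym.
exists c => //; rewrite lam_maxE -cE qformN opprK; split => // u.
by have := c_max u; rewrite -cE !qformN mulNr lerN2.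
Qed.

End Rayleigh.

Lemma classM_affine_bounds (R : realType) (N : nat) (W : Type)
    (D : W -> 'M[R]_N -> Prop) (F : W -> 'M[R]_N -> R) :
  (forall w, {within [set X | D w X], continuous (F w)}) ->
  (forall w, exists (k c : R) (a : 'M[R]_N -> R),
     [/\ 0 < k, 0 < c, continuous a,
      forall M X, D w X -> loewner_le X M ->
        - F w X <= k * (a M + c * lam_min X) &
      forall M Y, D w Y -> loewner_le (- Y) M ->
        k * (- a M + c * lam_max Y) <= - F w Y]) ->
  classM D F.
Proof.
move=> F_cont bounds; split => // w S1 S2 _ _ _ _.
have [k [c [a [k_gt0 c_gt0 a_cont ub lb]]]] := bounds w.
have affine_inc b : {homo (fun t => k * (b + c * t)) : s t / s < t} /\
                    bijective (fun t => k * (b + c * t)).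
  split => [s t st|]; first by rewrite ltr_pM2l // ltrD2l ltr_pM2l.
  by exists (fun y => (y / k - b) / c) => y /=; field; rewrite !gt_eqF.
have affine_root b : k * (b + c * (- b / c)) = 0 by field; rewrite gt_eqF.
have root_cont (s : R) : continuous (fun M => s * a M / c).
  apply: continuous_mul; last exact: cst_continuous.
  by apply: continuous_mul; [exact: cst_continuous | exact: a_cont].
exists (fun t M => k * (a M + c * t)), (fun t M => k * (- a M + c * t)).
exists (fun M => - a M / c), (fun M => a M / c).
split; first by move=> M _; exact: affine_inc.
split; first by move=> M _; exact: affine_inc.
split; first by move=> M _; rewrite affine_root.
split.
  by apply: continuous_subspaceT; under eq_fun do rewrite -mulN1r; exact: root_cont.
split; first by move=> M _; rewrite -[X in c * (X / c)]opprK affine_root.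
split.
  by apply: continuous_subspaceT; under eq_fun do rewrite -[a _]mul1r; exact: root_cont.
by split=> M X _; [exact: ub | exact: lb].
Qed.

Section PLaplacianClassM.
Variables (R : realType) (N : nat).
Implicit Types (p : R) (nu : 'cV[R]_N) (M X Y : 'M[R]_N).

Lemma Fp_nplap p nu X : Fp p nu X = - vnorm nu `^ (p - 2) * nplap p nu X.
Proof. by rewrite /Fp /nplap /vnorm sqr_sqrtr // sqnorm_ge0. Qed.

Lemma nplap_continuous p nu : continuous (nplap p nu).
Proof.
have qform_cont : continuous (fun X : 'M[R]_N => qform X nu).
  under eq_fun do rewrite qform_sum.
  apply: continuous_sum => i; apply: continuous_sum => j.
  apply: continuous_mul; last exact: cst_continuous.
  by apply: continuous_mul; [exact: cst_continuous | exact: coord_continuous].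
move=> X; apply: continuousD.
  by apply: continuous_sum => i; exact: coord_continuous.
apply: continuous_mul; first exact: cst_continuous.
by apply: continuous_mul; [exact: qform_cont | exact: cst_continuous].
Qed.

Lemma mx_abs_sum_continuous : continuous (@mx_abs_sum R N).
Proof.
apply: continuous_sum => i; apply: continuous_sum => j X.
by apply: continuous_comp; [exact: coord_continuous | exact: norm_continuous].
Qed.

Lemma nplap_le_lam_min p nu M X : (0 < N)%N -> 1 <= p -> X^T = X ->
  loewner_le X M ->
  nplap p nu X <= nplap p nu M + Num.min 1 (p - 1) * (mx_abs_sum M + lam_min X).
Proof.
move=> N_gt0 p_ge1 X_sym XM; have [v v1 [<- _]] := lam_min_rayleigh N_gt0 X_sym.
exact: nplap_le_psd_sub.
Qed.

Lemma nplap_ge_lam_max p nu M Y : (0 < N)%N -> 1 <= p -> Y^T = Y ->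
  loewner_le (- Y) M ->
  - (nplap p nu M + Num.min 1 (p - 1) * mx_abs_sum M)
    + Num.min 1 (p - 1) * lam_max Y <= nplap p nu Y.
Proof.
move=> N_gt0 p_ge1 Y_sym YM; have [v v1 [vY _]] := lam_max_rayleigh N_gt0 Y_sym.
have := nplap_le_psd_sub nu p_ge1 YM v1.
rewrite nplapN qformN vY mulrDr mulrN; lra.
Qed.

End PLaplacianClassM.

Lemma classM_Fp (R : realType) (N : nat) (Omega : set 'cV[R]_N) (p : R) :
  (0 < N)%N -> 1 < p -> classM (DFp Omega) (Fp_full p).
Proof.
move=> N_gt0 p_gt1; have p_ge1 := ltW p_gt1; set c := Num.min 1 (p - 1).
have c_gt0 : 0 < c by rewrite lt_min ltr01 subr_gt0.
apply: classM_affine_bounds => [w|w]; rewrite /Fp_full.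
  apply: continuous_subspaceT; under eq_fun do rewrite Fp_nplap.
  by apply: continuous_mul; [exact: cst_continuous | exact: nplap_continuous].
have [nu0|nu_nz] := eqVneq w.2 0.
  exists 1, 1, (fun=> 0); split => //; first exact: cst_continuous.
    by move=> M X [_ [+ _]]; rewrite nu0 eqxx.
  by move=> M Y [_ [+ _]]; rewrite nu0 eqxx.
have k_gt0 : 0 < vnorm w.2 `^ (p - 2) by rewrite powR_gt0 // sqrtr_gt0 sqnorm_gt0.
exists (vnorm w.2 `^ (p - 2)), c, (fun M => nplap p w.2 M + c * mx_abs_sum M).
split => // [|M X [_ [_ X_sym]] XM|M Y [_ [_ Y_sym]] YM].
- move=> M; apply: continuousD; first exact: nplap_continuous.
  by apply: continuous_mul; [exact: cst_continuous | exact: mx_abs_sum_continuous].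
- rewrite Fp_nplap mulNr opprK ler_pM2l // -addrA -mulrDr.
  exact: nplap_le_lam_min.
- rewrite Fp_nplap mulNr opprK ler_pM2l //.
  exact: nplap_ge_lam_max.
Qed.

Lemma not_classM_F1 (R : realType) (N : nat) (Omega : set 'cV[R]_N) :
  (0 < N)%N -> Omega !=set0 -> ~ classM (DFp Omega) (Fp_full 1).
Proof.
move=> N_gt0 [x0 Omega_x0] [_ FM].
pose e : 'cV[R]_N := delta_mx (Ordinal N_gt0) ord0.
have e1 : sqnorm e = 1 by rewrite /sqnorm trmx_delta mul_delta_mx mxE !eqxx.
have e_nz : e != 0 by rewrite -sqnorm_eq0 e1 oner_eq0.
pose w := (x0, 0 : R, e).
have S2_sym (X : 'M[R]_N) : [set 0] X -> symmx X by move->; rewrite /symmx trmx0.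
have S2_D (X : 'M[R]_N) : [set 0] X -> DFp Omega w X by move=> /S2_sym.
have [g1 [g2 [h1 [h2 [_ [g2_inc [_ [_ [_ [_ [_ g2_le]]]]]]]]]]] :=
  FM w set0 [set 0] (fun=> False_ind _) S2_sym (fun=> False_ind _) S2_D.
have [g2_mono [g2inv _ g2K]] := g2_inc 0 erefl.
set s := g2inv 1; pose t := `|s|; pose Y := t *: (e *m e^T).
have Y_sym : Y^T = Y by rewrite /Y linearZ /= trmx_mul trmxK.
have YM : loewner_le (- Y) 0.
  move=> v; rewrite sub0r opprK -/(qform Y v) qformZl mulr_ge0 ?normr_ge0 //.
  exact: psdmx_rank1.
have := g2_le 0 Y erefl (conj Omega_x0 (conj e_nz Y_sym)) YM.
rewrite /Fp_full Fp_nplap nplap1_rank1 mulr0 oppr0 => g2_le0.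
have [_ _ [_ Y_max]] := lam_max_rayleigh N_gt0 Y_sym.
have := Y_max e; rewrite qformZl qform_rank1 -/(sqnorm e) e1 expr1n !mulr1 => t_le.
have := ltW_homo g2_mono (le_trans (ler_norm s) t_le); rewrite /= g2K.
lra.
Qed.

Unset Implicit Arguments.

Theorem proposition1 (R : realType) (N : nat) (Omega : set 'cV[R]_N) (p : R) :
  (0 < N)%N -> open Omega -> Omega !=set0 -> 1 <= p ->
  (classM (DFp Omega) (Fp_full p) <-> 1 < p).
Proof.
move=> N_gt0 _ Omega_n0 p_ge1; split => [FM|]; last exact: classM_Fp.
rewrite lt_def p_ge1 andbT; apply: contraPneq FM => p1.
by rewrite p1; exact: not_classM_F1.
Qed.
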